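(* Let $\boldsymbol{P}\in\mathbb{R}^{n\times n}$, $\boldsymbol{A}=\mathrm{softmax}(\boldsymbol{P})$ and $\alpha=\max_{i,j}\lvert\boldsymbol{P}_{ij}\rvert$. For $\boldsymbol{X}\in\mathbb{R}^{n\times d}$ and $\boldsymbol{W}_V\in\mathbb{R}^{d\times d}$ define $\mathrm{SA}(\boldsymbol{X})=\boldsymbol{A}\boldsymbol{X}\boldsymbol{W}_V$. Then $$\lVert\mathrm{HC}[\mathrm{SA}(\boldsymbol{X})]\rVert_F\le\sqrt{\frac{n e^{2\alpha}}{e^{2\alpha}+n-1}}\;\lVert\boldsymbol{W}_V\rVert_2\,\lVert\mathrm{HC}[\boldsymbol{X}]\rVert_F .$$ Moreover, if $\boldsymbol{P}=\boldsymbol{X}\boldsymbol{W}_Q(\boldsymbol{X}\boldsymbol{W}_K)^T/\sqrt d$ with $\boldsymbol{W}_Q,\boldsymbol{W}_K\in\mathbb{R}^{d\times d_k}$, and the rows $\boldsymbol{x}_i$ of $\boldsymbol{X}$ satisfy $\lVert\boldsymbol{x}_i\rVert_2\le\gamma$ for all $i$ (some $\gamma>0$), then $\alpha\le\gamma^2\lVert\boldsymbol{W}_Q\boldsymbol{W}_K^T\rVert_2/\sqrt d$.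
   Context: $\mathrm{softmax}$ is applied row-wise: $\mathrm{softmax}(\boldsymbol{P})_{ij}=e^{\boldsymbol{P}_{ij}}/\sum_t e^{\boldsymbol{P}_{it}}$. $\boldsymbol{1}\in\mathbb{R}^n$ is the all-ones vector and for $\boldsymbol{X}\in\mathbb{R}^{n\times d}$, $\mathrm{HC}[\boldsymbol{X}]=(\boldsymbol{I}-\frac1n\boldsymbol{1}\boldsymbol{1}^T)\boldsymbol{X}$ (the high-frequency component, i.e. $\boldsymbol{X}$ minus its column means). $\lVert\cdot\rVert_F$ is the Frobenius norm and $\lVert\cdot\rVert_2$ the spectral norm. *)

From HB Require Import structures.
From mathcomp Require Import all_boot all_order all_algebra.
From mathcomp Require Import boolp classical_sets reals.
From mathcomp Require Import sequences exp.
Set Implicit Arguments. Unset Strict Implicit. Unset Printing Implicit Defensive.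
Import Order.TTheory GRing.Theory Num.Theory.
Local Open Scope ring_scope.
Local Open Scope classical_set_scope.

Definition frob {R : realType} {m n : nat} (A : 'M[R]_(m, n)) : R :=
  Num.sqrt (\sum_(i < m) \sum_(j < n) A i j ^+ 2).

Definition specnorm {R : realType} {m n : nat} (A : 'M[R]_(m, n)) : R :=
  sup [set r | exists v : 'cV[R]_n, frob v <= 1 /\ r = frob (A *m v)].

Definition softmax {R : realType} {n m : nat} (P : 'M[R]_(n, m)) : 'M[R]_(n, m) :=
  \matrix_(i, j) (expR (P i j) / \sum_(t < m) expR (P i t)).

Definition HC {R : realType} {n d : nat} (X : 'M[R]_(n, d)) : 'M[R]_(n, d) :=
  (1%:M - (n%:R)^-1 *: (const_mx 1 : 'M[R]_n)) *m X.

(* max_{i,j} |P_ij| (0 for an empty matrix). *)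
Definition maxabs {R : realType} {n m : nat} (P : 'M[R]_(n, m)) : R :=
  \big[Num.max/0]_(i < n) \big[Num.max/0]_(j < m) `|P i j|.

(* Write HC = I - J with J = 1 1^T / n.  The softmax matrix A is row
   stochastic, so A J = J; hence HC (A X W) = HC (A HC[X] W), i.e. only the
   high-frequency part of X survives the attention layer.  Dropping the
   projection HC and then the right factor W (each row of a matrix times W
   shrinks by at most ||W||_2) leaves ||A Z||_F^2, which Jensen's inequality
   along the rows of A bounds by (max_j sum_i A_ij) ||Z||_F^2.  All the
   exponentials in a row of A lie in [e^-alpha, e^alpha], so every entry of A
   is at most e^(2 alpha) / (e^(2 alpha) + n - 1), and the column sums are at
   most n times that.  For the second claim each score is the bilinear form
   x_i^T (W_Q W_K^T) x_j / sqrt d, bounded by Cauchy-Schwarz. *)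

From HB Require Import structures.
From mathcomp Require Import all_boot all_order all_algebra.
From mathcomp Require Import classical_sets reals.
From mathcomp Require Import sequences exp.
From mathcomp Require Import ring lra.
Import Order.TTheory GRing.Theory Num.Theory.
Local Open Scope ring_scope.

Lemma sum_mul_sqr_le (R : realDomainType) (m : nat) (f g : 'I_m -> R) :
  (\sum_i f i * g i) ^+ 2 <= (\sum_i f i ^+ 2) * (\sum_i g i ^+ 2).
Proof.
have lagrange : \sum_i \sum_j (f i * g j - f j * g i) ^+ 2 =
    \sum_i \sum_j f i ^+ 2 * g j ^+ 2 + \sum_i \sum_j g i ^+ 2 * f j ^+ 2
    - 2 * \sum_i \sum_j f i * g i * (f j * g j).
  rewrite mulr_sumr -big_split -sumrB /=; apply: eq_bigr => i _.
  rewrite mulr_sumr -big_split -sumrB /=; apply: eq_bigr => j _; ring.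
have : 0 <= \sum_i \sum_j (f i * g j - f j * g i) ^+ 2.
  by do 2![apply: sumr_ge0 => ? _]; exact: sqr_ge0.
rewrite lagrange -!big_distrlr /= [(\sum_i g i ^+ 2) * _]mulrC -expr2; lra.
Qed.

Lemma wsum_sqr_le (R : rcfType) (m : nat) (w y : 'I_m -> R) :
  (forall i, 0 <= w i) ->
  (\sum_i w i * y i) ^+ 2 <= (\sum_i w i) * (\sum_i w i * y i ^+ 2).
Proof.
move=> w_ge0; have sqr_sqrtw i : Num.sqrt (w i) ^+ 2 = w i by exact: sqr_sqrtr.
have := @sum_mul_sqr_le R m (fun i => Num.sqrt (w i)) (fun i => Num.sqrt (w i) * y i).
congr (_ <= _); [congr (_ ^+ 2) | congr (_ * _)]; apply: eq_bigr => i _;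
  by rewrite ?exprMn ?mulrA -?expr2 sqr_sqrtw.
Qed.

Lemma sum_sqr_centered_le (R : realFieldType) (n : nat) (x : 'I_n -> R) :
  \sum_i (x i - n%:R^-1 * \sum_k x k) ^+ 2 <= \sum_i x i ^+ 2.
Proof.
case: n x => [|n] x; first by rewrite !big_ord0.
set S := \sum_k x k; set c := n.+1%:R^-1.
have cn : c * n.+1%:R = 1 by rewrite mulVf ?pnatr_eq0.
have -> : \sum_i (x i - c * S) ^+ 2 = \sum_i x i ^+ 2 - c * S ^+ 2.
  transitivity (\sum_i x i ^+ 2 - \sum_i 2 * c * S * x i + \sum_(i < n.+1) (c * S) ^+ 2).
    by rewrite -sumrB -big_split /=; apply: eq_bigr => i _; ring.
  rewrite -mulr_sumr -/S sumr_const card_ord -[_ *+ n.+1]mulr_natr.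
  have -> : (c * S) ^+ 2 * n.+1%:R = c * S ^+ 2 * (c * n.+1%:R) by ring.
  by rewrite cn; ring.
have : 0 <= c * S ^+ 2 by rewrite mulr_ge0 ?invr_ge0 ?ler0n ?sqr_ge0.
lra.
Qed.

Lemma ler_ratio_add (R : realFieldType) (x y a b : R) :
  0 < x -> 0 <= y -> 0 < a -> 0 <= b -> x * b <= a * y ->
  x / (x + y) <= a / (a + b).
Proof.
move=> x_gt0 y_ge0 a_gt0 b_ge0 xb_le_ay.
rewrite ler_pdivrMr ?ltr_wpDr // mulrAC ler_pdivlMr ?ltr_wpDr //.
nra.
Qed.

Section SelfAttention.
Variable R : realType.
Set Implicit Arguments.

Definition sqfrob m n (A : 'M[R]_(m, n)) : R := \sum_i \sum_j A i j ^+ 2.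

Lemma sqfrob_ge0 m n (A : 'M[R]_(m, n)) : 0 <= sqfrob A.
Proof. by do 2![apply: sumr_ge0 => ? _]; exact: sqr_ge0. Qed.

Lemma frobE m n (A : 'M[R]_(m, n)) : frob A = Num.sqrt (sqfrob A).
Proof. by []. Qed.

Lemma frob_ge0 m n (A : 'M[R]_(m, n)) : 0 <= frob A.
Proof. exact: sqrtr_ge0. Qed.

Lemma sqr_frob m n (A : 'M[R]_(m, n)) : frob A ^+ 2 = sqfrob A.
Proof. by rewrite sqr_sqrtr // sqfrob_ge0. Qed.

Lemma frob0 m n : frob (0 : 'M[R]_(m, n)) = 0.
Proof.
by rewrite /frob big1 ?sqrtr0 // => i _; rewrite big1 // => j _; rewrite mxE expr0n.
Qed.

Lemma frobZ m n (a : R) (A : 'M[R]_(m, n)) : frob (a *: A) = `|a| * frob A.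
Proof.
rewrite /frob -sqrtr_sqr -sqrtrM ?sqr_ge0 // mulr_sumr; congr Num.sqrt.
by apply: eq_bigr => i _; rewrite mulr_sumr; apply: eq_bigr => j _; rewrite mxE exprMn.
Qed.

Lemma sqfrob_tr m n (A : 'M[R]_(m, n)) : sqfrob A^T = sqfrob A.
Proof.
by rewrite /sqfrob exchange_big; do 2![apply: eq_bigr => ? _]; rewrite mxE.
Qed.

Lemma frob_tr m n (A : 'M[R]_(m, n)) : frob A^T = frob A.
Proof. exact: (congr1 Num.sqrt (sqfrob_tr A)). Qed.

Lemma sqfrob_rows m n (A : 'M[R]_(m, n)) : sqfrob A = \sum_i sqfrob (row i A).
Proof.
apply: eq_bigr => i _; rewrite /sqfrob big_ord1.
by apply: eq_bigr => j _; rewrite mxE.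
Qed.

Lemma sqfrob_col n (v : 'cV[R]_n) : sqfrob v = \sum_i v i 0 ^+ 2.
Proof. by apply: eq_bigr => i _; rewrite big_ord1. Qed.

Lemma sqfrob_row n (u : 'rV[R]_n) : sqfrob u = \sum_j u 0 j ^+ 2.
Proof. by rewrite /sqfrob big_ord1. Qed.

Lemma normr_dot_le p (u : 'rV[R]_p) (v : 'cV[R]_p) :
  `|(u *m v) 0 0| <= frob u * frob v.
Proof.
rewrite !frobE -sqrtrM ?sqfrob_ge0 // -sqrtr_sqr sqfrob_row sqfrob_col.
by apply: ler_wsqrtr; rewrite mxE sum_mul_sqr_le.
Qed.

Lemma sqfrob_dot p (u : 'rV[R]_p) : sqfrob u = (u *m u^T) 0 0.
Proof. by rewrite sqfrob_row mxE; apply: eq_bigr => j _; rewrite mxE expr2. Qed.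

Lemma frob_mulmx_le p q (W : 'M[R]_(p, q)) (v : 'cV[R]_q) :
  frob (W *m v) <= frob W * frob v.
Proof.
rewrite !frobE -sqrtrM ?sqfrob_ge0 //; apply: ler_wsqrtr.
rewrite sqfrob_col sqfrob_col /sqfrob mulr_suml; apply: ler_sum => i _.
by rewrite mxE sum_mul_sqr_le.
Qed.

Lemma specnorm_has_sup p q (W : 'M[R]_(p, q)) :
  has_sup [set r | exists v : 'cV[R]_q, frob v <= 1 /\ r = frob (W *m v)].
Proof.
split; first by exists 0; exists 0; rewrite mulmx0 !frob0 ler01.
exists (frob W) => _ [v [v_le1 ->]].
apply: le_trans (frob_mulmx_le W v) _.
by rewrite ler_piMr ?frob_ge0.
Qed.

Lemma specnorm_ub p q (W : 'M[R]_(p, q)) (v : 'cV[R]_q) :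
  frob v <= 1 -> frob (W *m v) <= specnorm W.
Proof. by move=> v_le1; apply: (sup_upper_bound (specnorm_has_sup W)); exists v. Qed.

Lemma specnorm_ge0 p q (W : 'M[R]_(p, q)) : 0 <= specnorm W.
Proof. by have := specnorm_ub W (0 : 'cV_q); rewrite mulmx0 !frob0 ler01; apply. Qed.

Lemma frob_mulmx_specnorm p q (W : 'M[R]_(p, q)) (v : 'cV[R]_q) :
  frob (W *m v) <= specnorm W * frob v.
Proof.
have [v0|v_neq0] := eqVneq (frob v) 0.
  by have := frob_mulmx_le W v; rewrite v0 !mulr0.
have v_gt0 : 0 < frob v by rewrite lt_def v_neq0 frob_ge0.
have := specnorm_ub W ((frob v)^-1 *: v).
rewrite -scalemxAr !frobZ ger0_norm ?invr_ge0 ?frob_ge0 // mulVf // lexx.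
by move=> /(_ isT); rewrite mulrC ler_pdivrMr.
Qed.

(* Duality: ||u W||^2 = <u, W (u W)^T> <= ||u|| ||W||_2 ||u W||. *)
Lemma frob_row_mulmx_specnorm p q (u : 'rV[R]_p) (W : 'M[R]_(p, q)) :
  frob (u *m W) <= specnorm W * frob u.
Proof.
set x := frob (u *m W); set s := specnorm W.
have : x ^+ 2 <= frob u * (s * x).
  rewrite sqr_frob sqfrob_dot -mulmxA.
  apply: le_trans (ler_norm _) _; apply: le_trans (normr_dot_le _ _) _.
  by rewrite ler_wpM2l ?frob_ge0 // -[x](frob_tr (u *m W)) frob_mulmx_specnorm.
have := frob_ge0 (u *m W); have := mulr_ge0 (specnorm_ge0 W) (frob_ge0 u).
rewrite -/x -/s; nra.
Qed.

Lemma sqfrob_mulmx_specnorm m p q (Y : 'M[R]_(m, p)) (W : 'M[R]_(p, q)) :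
  sqfrob (Y *m W) <= specnorm W ^+ 2 * sqfrob Y.
Proof.
rewrite (sqfrob_rows (Y *m W)) (sqfrob_rows Y) mulr_sumr; apply: ler_sum => i _.
rewrite row_mul -!sqr_frob -exprMn ler_pXn2r ?nnegrE ?frob_ge0 //.
  exact: frob_row_mulmx_specnorm.
exact: mulr_ge0 (specnorm_ge0 W) (frob_ge0 _).
Qed.

Definition meanmx n : 'M[R]_n := n%:R^-1 *: const_mx 1.

Lemma HCE n d (M : 'M[R]_(n, d)) : HC M = M - meanmx n *m M.
Proof. by rewrite /HC mulmxBl mul1mx. Qed.

Lemma HCD n d (M N : 'M[R]_(n, d)) : HC (M + N) = HC M + HC N.
Proof. exact: mulmxDr. Qed.

Lemma HC_entry n d (M : 'M[R]_(n, d)) i j :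
  HC M i j = M i j - n%:R^-1 * \sum_k M k j.
Proof.
rewrite HCE -scalemxAl !mxE; congr (_ - _ * _).
by apply: eq_bigr => k _; rewrite mxE mul1r.
Qed.

Lemma meanmx_idem n : meanmx n *m meanmx n = meanmx n.
Proof.
case: n => [|n]; apply/matrixP => i j; first by case: i.
rewrite !mxE; under eq_bigr do rewrite !mxE !mulr1.
by rewrite sumr_const card_ord; field; rewrite addrC natr1 pnatr_eq0.
Qed.

Lemma HC_meanmx_mul n d (M : 'M[R]_(n, d)) : HC (meanmx n *m M) = 0.
Proof. by rewrite HCE mulmxA meanmx_idem subrr. Qed.

Lemma sqfrob_HC_le n d (M : 'M[R]_(n, d)) : sqfrob (HC M) <= sqfrob M.
Proof.
rewrite /sqfrob exchange_big [leRHS]exchange_big; apply: ler_sum => j _ /=.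
under eq_bigr do rewrite HC_entry.
exact: sum_sqr_centered_le.
Qed.

Section RowStochastic.
Variables (n : nat) (A : 'M[R]_n).
Hypothesis A_ge0 : forall i j, 0 <= A i j.
Hypothesis A_rowsum : forall i, \sum_j A i j = 1.

Lemma stochastic_mul_meanmx : A *m meanmx n = meanmx n.
Proof.
apply/matrixP => i j; rewrite !mxE; under eq_bigr do rewrite !mxE.
by rewrite -mulr_suml A_rowsum mul1r.
Qed.

Lemma HC_stochastic_mulmx d e (X : 'M[R]_(n, d)) (W : 'M[R]_(d, e)) :
  HC (A *m X *m W) = HC (A *m HC X *m W).
Proof.
have -> : A *m X *m W = A *m HC X *m W + meanmx n *m (X *m W).
  rewrite HCE mulmxBr [A *m (_ *m _)]mulmxA stochastic_mul_meanmx mulmxBl.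
  by rewrite mulmxA subrK.
by rewrite HCD HC_meanmx_mul addr0.
Qed.

Lemma sqfrob_stochastic_mulmx d (c : R) (Z : 'M[R]_(n, d)) :
  (forall j, \sum_i A i j <= c) -> sqfrob (A *m Z) <= c * sqfrob Z.
Proof.
move=> A_colsum.
apply: (@le_trans _ _ (\sum_i \sum_k \sum_j A i j * Z j k ^+ 2)).
  apply: ler_sum => i _; apply: ler_sum => k _; rewrite mxE.
  by have := @wsum_sqr_le R n (A i) (Z^~ k) (A_ge0 i); rewrite A_rowsum mul1r.
rewrite exchange_big /=; under eq_bigr do rewrite exchange_big /=.
rewrite exchange_big /= /sqfrob mulr_sumr; apply: ler_sum => j _.
rewrite mulr_sumr; apply: ler_sum => k _; rewrite -mulr_suml.
by rewrite ler_wpM2r ?sqr_ge0.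
Qed.

Lemma sqfrob_HC_stochastic_mulmx d e (c : R) (X : 'M[R]_(n, d))
    (W : 'M[R]_(d, e)) :
  (forall j, \sum_i A i j <= c) ->
  sqfrob (HC (A *m X *m W)) <= c * specnorm W ^+ 2 * sqfrob (HC X).
Proof.
move=> A_colsum; rewrite HC_stochastic_mulmx.
apply: le_trans (sqfrob_HC_le _) _; apply: le_trans (sqfrob_mulmx_specnorm _ _) _.
rewrite [c * _]mulrC -[leRHS]mulrA.
by apply: ler_wpM2l; [exact: sqr_ge0 | exact: sqfrob_stochastic_mulmx].
Qed.

Lemma frob_HC_stochastic_mulmx d e (c : R) (X : 'M[R]_(n, d))
    (W : 'M[R]_(d, e)) :
  0 <= c -> (forall j, \sum_i A i j <= c) ->
  frob (HC (A *m X *m W)) <= Num.sqrt c * specnorm W * frob (HC X).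
Proof.
move=> c_ge0 A_colsum; rewrite !frobE -(ger0_norm (specnorm_ge0 W)) -sqrtr_sqr.
rewrite -!sqrtrM ?mulr_ge0 ?sqr_ge0 ?specnorm_ge0 //; apply: ler_wsqrtr.
exact: sqfrob_HC_stochastic_mulmx.
Qed.

End RowStochastic.

Lemma maxabs_ge n m (P : 'M[R]_(n, m)) i j : `|P i j| <= maxabs P.
Proof. exact: le_trans (le_bigmax _ (fun j => `|P i j|) j) (le_bigmax _ _ i). Qed.

Lemma maxabs_le n m (P : 'M[R]_(n, m)) (b : R) :
  0 <= b -> (forall i j, `|P i j| <= b) -> maxabs P <= b.
Proof. by move=> b_ge0 P_le; apply: bigmax_le => // i _; apply: bigmax_le. Qed.

Section Softmax.
Variables (n : nat) (P : 'M[R]_n).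

Lemma softmax_ge0 i j : 0 <= softmax P i j.
Proof. by rewrite mxE divr_ge0 ?expR_ge0 ?sumr_ge0 // => t _; rewrite expR_ge0. Qed.

Lemma softmax_rowsum i : \sum_j softmax P i j = 1.
Proof.
under eq_bigr do rewrite mxE.
rewrite -mulr_suml mulfV // gt_eqF //.
by rewrite (bigD1 i) //= ltr_pwDl ?expR_gt0 ?sumr_ge0 // => t _; rewrite expR_ge0.
Qed.

Lemma softmax_le (a : R) i j : (forall i j, `|P i j| <= a) ->
  softmax P i j <= expR (2 * a) / (expR (2 * a) + n%:R - 1).
Proof.
move=> P_le; rewrite mxE (bigD1 j) //= -addrA.
set x := expR (P i j); set T := \sum_(t | t != j) expR (P i t).
have n_ge1 : 1 <= n%:R :> R by rewrite ler1n (leq_ltn_trans _ (ltn_ord j)).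
have T_ge : (n%:R - 1) * expR (- a) <= T.
  have <- : \sum_(t | t != j) expR (- a) = (n%:R - 1) * expR (- a).
    have : \sum_(t < n) expR (- a) = expR (- a) + \sum_(t | t != j) expR (- a).
      by rewrite (bigD1 j).
    rewrite sumr_const card_ord -mulr_natl; lra.
  by apply: ler_sum => t _; rewrite ler_expR (lerNnormlW (P_le i t)).
apply: ler_ratio_add; rewrite ?expR_gt0 ?subr_ge0 //.
  by apply: sumr_ge0 => t _; apply: expR_ge0.
apply: (@le_trans _ _ (expR a * (n%:R - 1))).
  by rewrite ler_wpM2r ?subr_ge0 // ler_expR (ler_normlW (P_le i j)).
have -> : expR a * (n%:R - 1) = expR (2 * a) * ((n%:R - 1) * expR (- a)).
  have E : expR (2 * a) * expR (- a) = expR a by rewrite -expRD; congr expR; ring.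
  by rewrite mulrCA E mulrC.
by rewrite ler_wpM2l ?expR_ge0.
Qed.

Lemma softmax_colsum_le (a : R) j : (forall i j, `|P i j| <= a) ->
  \sum_i softmax P i j <= n%:R * expR (2 * a) / (expR (2 * a) + n%:R - 1).
Proof.
move=> P_le; rewrite -mulrA [_ * (_ / _)]mulr_natl -[n in _ *+ n]card_ord.
by rewrite -sumr_const; apply: ler_sum => i _; apply: softmax_le.
Qed.

Lemma softmax_colsum_bound_ge0 (b : R) : 0 <= n%:R * expR b / (expR b + n%:R - 1).
Proof.
case: n => [|k]; first by rewrite !mul0r.
by rewrite divr_ge0 ?mulr_ge0 ?expR_ge0 // -natr1 addrA addrK addr_ge0 ?expR_ge0.
Qed.

End Softmax.

Lemma mulmx_trmx_entry m p q r (Y : 'M[R]_(m, p)) (M : 'M[R]_(p, q))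
    (Z : 'M[R]_(r, q)) i j :
  (Y *m M *m Z^T) i j = (row i Y *m M *m (row j Z)^T) 0 0.
Proof.
rewrite !mxE; apply: eq_bigr => k _; rewrite !mxE; congr (_ * _).
by apply: eq_bigr => l _; rewrite !mxE.
Qed.

Lemma normr_bilinear_le p q (u : 'rV[R]_p) (M : 'M[R]_(p, q)) (v : 'rV[R]_q) :
  `|(u *m M *m v^T) 0 0| <= specnorm M * frob u * frob v.
Proof.
rewrite -mulmxA; apply: le_trans (normr_dot_le _ _) _.
rewrite [specnorm M * _]mulrC -mulrA ler_wpM2l ?frob_ge0 //.
by rewrite -(frob_tr v) frob_mulmx_specnorm.
Qed.

Lemma maxabs_attention_le n d dk (X : 'M[R]_(n, d)) (WQ WK : 'M[R]_(d, dk))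
    (gamma : R) :
  0 <= gamma -> (forall i, frob (row i X) <= gamma) ->
  maxabs ((Num.sqrt d%:R)^-1 *: ((X *m WQ) *m (X *m WK)^T))
    <= gamma ^+ 2 * specnorm (WQ *m WK^T) / Num.sqrt d%:R.
Proof.
move=> gamma_ge0 X_rows; set s := specnorm _.
have s_ge0 : 0 <= s by exact: specnorm_ge0.
have sqrtd_ge0 : 0 <= (Num.sqrt d%:R)^-1 :> R by rewrite invr_ge0 sqrtr_ge0.
apply: maxabs_le => [|i j]; first by rewrite !mulr_ge0 ?exprn_ge0.
rewrite trmx_mul mulmxA -[X *m WQ *m WK^T]mulmxA mxE mulmx_trmx_entry.
rewrite normrM ger0_norm // [leRHS]mulrC ler_wpM2l //.
apply: le_trans (normr_bilinear_le _ _ _) _.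
rewrite -/s (_ : gamma ^+ 2 * s = s * gamma * gamma); last by ring.
by rewrite ler_pM ?mulr_ge0 ?frob_ge0 ?ler_wpM2l.
Qed.

End SelfAttention.

Theorem theorem3 (R : realType) (n d : nat) (P : 'M[R]_n) (X : 'M[R]_(n, d)) :
  let alpha := maxabs P in
  (forall WV : 'M[R]_d,
     frob (HC (softmax P *m X *m WV)) <=
       Num.sqrt (n%:R * expR (2 * alpha) / (expR (2 * alpha) + n%:R - 1))
       * specnorm WV * frob (HC X))
  /\
  (forall (dk : nat) (WQ WK : 'M[R]_(d, dk)) (gamma : R),
     0 < gamma ->
     P = (Num.sqrt d%:R)^-1 *: ((X *m WQ) *m (X *m WK)^T) ->
     (forall i : 'I_n, frob (row i X) <= gamma) ->
     alpha <= gamma ^+ 2 * specnorm (WQ *m WK^T) / Num.sqrt d%:R).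
Proof.
move=> alpha; rewrite {}/alpha; split=> [WV | dk WQ WK gamma /ltW gamma_ge0 ->].
  apply: frob_HC_stochastic_mulmx.
  - exact: softmax_ge0.
  - exact: softmax_rowsum.
  - exact: softmax_colsum_bound_ge0.
  - by move=> j; apply: softmax_colsum_le => i k; apply: maxabs_ge.
exact: maxabs_attention_le.
Qed.
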